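(* For $d\in[6.74,7.5]$ let $x(3,d)$ be the unique solution of $\Psi_d(x)=x$ in $[\frac38,\frac12]$ and set $\Phi^\star(d)=\Phi_3(d,x(3,d))$. Then $d\mapsto\Phi^\star(d)$ is continuous on $[6.74,7.5]$, $\Phi^\star(6.74)>0$ and $\Phi^\star(7.5)<0$.
   Context: $\hat\Psi(x)=\frac{1-2x^{2}}{1-x^{2}}$, $\dot\Psi(v)=\frac{1-v^{d-1}}{2-v^{d-1}}$, $\Psi_d=\dot\Psi\circ\hat\Psi$; $\Phi_3(d,x)=-\log(1-x)-d(\frac23-d^{-1})\log(1-2x^3)+(d-1)\log(1-x^{2})$. (Existence and uniqueness of $x(3,d)$ for these $d$ is known.) *)

From Stdlib Require Import Reals ClassicalEpsilon.
From Coquelicot Require Import Coquelicot.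
Open Scope R_scope.

Definition Psi_hat (x : R) : R := (1 - 2 * x ^ 2) / (1 - x ^ 2).

Definition Psi_dot (d v : R) : R :=
  (1 - Rpower v (d - 1)) / (2 - Rpower v (d - 1)).

Definition Psi (d x : R) : R := Psi_dot d (Psi_hat x).

Definition Phi3 (d x : R) : R :=
  - ln (1 - x) - d * (2 / 3 - / d) * ln (1 - 2 * x ^ 3)
  + (d - 1) * ln (1 - x ^ 2).

(* x(3,d): the (unique) solution of Psi_d(x) = x in [3/8, 1/2],
   chosen by Hilbert's epsilon (unspecified if none exists). *)
Definition xfix (d : R) : R :=
  epsilon (inhabits 0) (fun x => 3 / 8 <= x <= 1 / 2 /\ Psi d x = x).

Definition Phi_star (d : R) : R := Phi3 d (xfix d).

From Stdlib Require Import Reals Lra Psatz ClassicalEpsilon.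
From Coquelicot Require Import Coquelicot.
Open Scope R_scope.

(* With v = Psi_hat x and w = v^(d-1), the equation Psi_d x = x says w = (1-2x)/(1-x), that is
   Lq x = (d-1) Lq (x^2) for Lq t = ln ((1-t)/(1-2t)).  For d - 1 in [5.74, 6.5] the defect
   Lq x - (d-1) Lq (x^2) is negative on [3/8, 0.42], strictly increasing on [0.42, 1/2) and
   positive at 0.49, so x(3,d) is its unique zero there.  The defect is affine in d, so a
   sign-change argument makes x(3,d) continuous in d, and Phi3 is affine in d as well.  The
   signs at the endpoints follow by enclosing x(3,d) in short intervals and evaluating the
   logarithms with rational certificates from the series of ln ((1+z)/(1-z)). *)

Definition log_ratio_taylor (z : R) : R :=
  2 * (z + z^3/3 + z^5/5 + z^7/7 + z^9/9 + z^11/11 + z^13/13 + z^15/15 + z^17/17).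

Lemma log_ratio_taylor_error_pos (z : R) : 0 < z <= 1/2 ->
  log_ratio_taylor z <= ln (1 + z) - ln (1 - z) <= log_ratio_taylor z + 4/3 * z^18.
Proof.
  intros Hz.
  set (rem := fun t => ln (1 + t) - ln (1 - t) - log_ratio_taylor t).
  (* The remainder has derivative 2 t^18 / (1 - t^2), which lies in [0, 8/3 t^18]. *)
  destruct (MVT_cor2 rem (fun t => 2 * t^18 / (1 - t^2)) 0 z) as [c [Hmvt Hc]]; [lra| |].
  - intros c Hc. apply is_derive_Reals. unfold rem, log_ratio_taylor.
    auto_derive.
    + repeat split; lra.
    + field. repeat split; nra.
  - assert (Hrem0 : rem 0 = 0).
    { unfold rem, log_ratio_taylor. rewrite Rplus_0_r, Rminus_0_r, ln_1. field. }
    rewrite Hrem0 in Hmvt. unfold rem in Hmvt.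
    assert (Hpow : 0 <= c^18 <= z^18) by (split; [apply pow_le | apply pow_incr]; lra).
    assert (Hinv : 0 < / (1 - c^2) <= 4/3).
    { split; [apply Rinv_0_lt_compat; nra|].
      rewrite <- (Rinv_inv (4/3)). apply Rinv_le_contravar; nra. }
    assert (Hslope : 0 <= 2 * c^18 / (1 - c^2) * (z - 0) <= 4/3 * z^18).
    { unfold Rdiv. split; [apply Rmult_le_pos; [apply Rmult_le_pos|]; lra|].
      replace (2 * c^18 * / (1 - c^2) * (z - 0)) with (2 * (c^18 * (/ (1 - c^2) * z))) by ring.
      assert (c^18 * (/ (1 - c^2) * z) <= z^18 * (4/3 * (1/2))).
      { apply Rmult_le_compat; try lra; [apply Rmult_le_pos|apply Rmult_le_compat]; lra. }
      lra. }
    lra.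
Qed.

Lemma log_ratio_taylor_error (z : R) : -1/2 <= z <= 1/2 ->
  log_ratio_taylor z - 4/3 * z^18 <= ln (1 + z) - ln (1 - z)
  <= log_ratio_taylor z + 4/3 * z^18.
Proof.
  intros Hz. destruct (Rtotal_order z 0) as [Hneg|[Hzero|Hpos]].
  - assert (H := log_ratio_taylor_error_pos (- z) ltac:(lra)).
    replace (1 + - z) with (1 - z) in H by ring.
    replace (1 - - z) with (1 + z) in H by ring.
    replace (log_ratio_taylor (- z)) with (- log_ratio_taylor z) in H
      by (unfold log_ratio_taylor; field).
    replace ((- z)^18) with (z^18) in H by ring.
    lra.
  - subst. unfold log_ratio_taylor. rewrite Rplus_0_r, Rminus_0_r, ln_1. lra.
  - assert (H := log_ratio_taylor_error_pos z ltac:(lra)). lra.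
Qed.

Lemma ln2_bounds : 693147177 / 1000000000 <= ln 2 <= 693147184 / 1000000000.
Proof.
  assert (H := log_ratio_taylor_error (1/3) ltac:(lra)).
  rewrite <- ln_div in H by lra.
  replace ((1 + 1/3) / (1 - 1/3)) with 2 in H by field.
  unfold log_ratio_taylor in H. lra.
Qed.

Lemma ln_powerRZ (x : R) (s : Z) : 0 < x -> ln (powerRZ x s) = IZR s * ln x.
Proof. intros Hx. rewrite powerRZ_Rpower by exact Hx. unfold Rpower. apply ln_exp. Qed.

Lemma ln_ratio_scaled (z : R) (s : Z) : -1/2 <= z <= 1/2 ->
  ln (powerRZ 2 s * ((1 + z) / (1 - z))) = IZR s * ln 2 + (ln (1 + z) - ln (1 - z)).
Proof.
  intros Hz. rewrite ln_mult, ln_powerRZ, ln_div; try lra.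
  - apply powerRZ_lt; lra.
  - apply Rdiv_lt_0_compat; lra.
Qed.

Lemma ln_le_certificate (y z ub : R) (s : Z) : 0 < y -> -1/2 <= z <= 1/2 ->
  y * (1 - z) <= powerRZ 2 s * (1 + z) ->
  IZR s * ln 2 + log_ratio_taylor z + 4/3 * z^18 <= ub -> ln y <= ub.
Proof.
  intros Hy Hz Hyz Hub.
  assert (Hs := powerRZ_lt 2 s ltac:(lra)).
  assert (Hle : ln y <= ln (powerRZ 2 s * ((1 + z) / (1 - z)))).
  { apply ln_le; [exact Hy|].
    apply Rmult_le_reg_r with (1 - z); [lra|].
    replace (powerRZ 2 s * ((1 + z) / (1 - z)) * (1 - z)) with (powerRZ 2 s * (1 + z))
      by (field; lra).
    exact Hyz. }
  rewrite ln_ratio_scaled in Hle by exact Hz.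
  assert (H := log_ratio_taylor_error z Hz). lra.
Qed.

Lemma ln_ge_certificate (y z lb : R) (s : Z) : 0 < y -> -1/2 <= z <= 1/2 ->
  powerRZ 2 s * (1 + z) <= y * (1 - z) ->
  lb <= IZR s * ln 2 + log_ratio_taylor z - 4/3 * z^18 -> lb <= ln y.
Proof.
  intros Hy Hz Hyz Hlb.
  assert (Hs := powerRZ_lt 2 s ltac:(lra)).
  assert (Hle : ln (powerRZ 2 s * ((1 + z) / (1 - z))) <= ln y).
  { apply ln_le; [apply Rmult_lt_0_compat; [exact Hs | apply Rdiv_lt_0_compat; lra]|].
    apply Rmult_le_reg_r with (1 - z); [lra|].
    replace (powerRZ 2 s * ((1 + z) / (1 - z)) * (1 - z)) with (powerRZ 2 s * (1 + z))
      by (field; lra).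
    exact Hyz. }
  rewrite ln_ratio_scaled in Hle by exact Hz.
  assert (H := log_ratio_taylor_error z Hz). lra.
Qed.

Definition Lq (t : R) : R := ln ((1 - t) / (1 - 2 * t)).

(* The certificate [z] is a rational close to (y - 2^s) / (y + 2^s), so that 2^s (1+z)/(1-z)
   approximates y. *)
Ltac ln_certificate z s :=
  try unfold Lq;
  first [ apply (ln_le_certificate _ z _ s) | apply (ln_ge_certificate _ z _ s) ];
  [ nra | lra | simpl; nra
  | pose proof ln2_bounds; unfold log_ratio_taylor; simpl IZR; lra ].

Definition defect (k x : R) : R := Lq x - k * Lq (x^2).

Lemma Lq_le (s t : R) : 0 <= s <= t -> t < 1/2 -> Lq s <= Lq t.
Proof.
  intros Hst Ht. unfold Lq. apply ln_le; [apply Rdiv_lt_0_compat; lra|].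
  assert (E : (1 - t) / (1 - 2 * t) - (1 - s) / (1 - 2 * s)
              = (t - s) / ((1 - 2 * t) * (1 - 2 * s))) by (field; lra).
  assert (0 <= (t - s) / ((1 - 2 * t) * (1 - 2 * s)))
    by (apply Rdiv_le_0_compat; [lra | apply Rmult_lt_0_compat; lra]).
  lra.
Qed.

Lemma Lq_pos (t : R) : 0 < t < 1/2 -> 0 < Lq t.
Proof.
  intros Ht. unfold Lq. rewrite <- ln_1. apply ln_increasing; [lra|].
  assert (E : (1 - t) / (1 - 2 * t) - 1 = t / (1 - 2 * t)) by (field; lra).
  assert (0 < t / (1 - 2 * t)) by (apply Rdiv_lt_0_compat; lra).
  lra.
Qed.

Lemma ln_Psi_hat (x : R) : x^2 < 1/2 -> ln (Psi_hat x) = - Lq (x^2).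
Proof.
  intros Hx. unfold Psi_hat, Lq.
  replace ((1 - 2 * x^2) / (1 - x^2)) with (/ ((1 - x^2) / (1 - 2 * x^2))) by (field; lra).
  apply ln_Rinv. apply Rdiv_lt_0_compat; lra.
Qed.

Lemma Psi_fixed_iff (d x : R) : 1 < d -> 0 < x <= 1/2 ->
  (Psi d x = x <-> x < 1/2 /\ defect (d - 1) x = 0).
Proof.
  intros Hd Hx.
  assert (HL : 0 < Lq (x^2)) by (apply Lq_pos; nra).
  set (E := exp ((d - 1) * Lq (x^2))).
  assert (HE : 1 < E).
  { rewrite <- exp_0. apply exp_increasing. apply Rmult_lt_0_compat; lra. }
  assert (HPsi : Psi d x = (1 - / E) / (2 - / E)).
  { unfold Psi, Psi_dot, Rpower. rewrite ln_Psi_hat by nra.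
    replace ((d - 1) * - Lq (x^2)) with (- ((d - 1) * Lq (x^2))) by ring.
    rewrite exp_Ropp. reflexivity. }
  assert (Hw : 0 < / E < 1).
  { split; [apply Rinv_0_lt_compat; lra|].
    rewrite <- Rinv_1. apply Rinv_lt_contravar; lra. }
  assert (HLq : x < 1/2 -> exp (Lq x) = (1 - x) / (1 - 2 * x)).
  { intros Hx2. unfold Lq. apply exp_ln. apply Rdiv_lt_0_compat; lra. }
  rewrite HPsi. unfold defect. split.
  - intros Hfix.
    assert (Hx2 : x < 1/2).
    { destruct (Req_dec x (1/2)) as [Ehalf|]; [|lra].
      assert (1 - / E = x * (2 - / E)) by (rewrite <- Hfix; field; lra).
      rewrite Ehalf in *. lra. }
    split; [exact Hx2|].
    assert (Hinv : / E = (1 - 2 * x) / (1 - x)).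
    { rewrite <- Hfix. field. lra. }
    assert (HEx : E = exp (Lq x)).
    { rewrite HLq by exact Hx2. rewrite <- (Rinv_inv E), Hinv. field. lra. }
    apply exp_inv in HEx. lra.
  - intros [Hx2 Hdef].
    assert (HEx : E = (1 - x) / (1 - 2 * x)).
    { rewrite <- HLq by exact Hx2. unfold E. f_equal. lra. }
    rewrite HEx. field. lra.
Qed.

Lemma defect_neg_of_enclosure (k k0 x a b : R) : 0 <= k0 <= k -> 0 < a <= x -> x <= b < 1/2 ->
  Lq b < k0 * Lq (a^2) -> defect k x < 0.
Proof.
  intros Hk Hax Hxb Hab. unfold defect.
  assert (Hb : Lq x <= Lq b) by (apply Lq_le; lra).
  assert (Ha2 : Lq (a^2) <= Lq (x^2)) by (apply Lq_le; nra).
  assert (Ha2pos : 0 < Lq (a^2)) by (apply Lq_pos; nra).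
  assert (k0 * Lq (a^2) <= k * Lq (x^2)) by (apply Rmult_le_compat; lra).
  lra.
Qed.

Lemma defect_neg_low (k x : R) : 574/100 <= k -> 3/8 <= x <= 21/50 -> defect k x < 0.
Proof.
  intros Hk Hx.
  destruct (Rle_lt_dec x (389/1000)).
  { apply (defect_neg_of_enclosure k (574/100) x (3/8) (389/1000)); try lra.
    assert (Lq (389/1000) <= 101241958419/100000000000)
      by ln_certificate (-92394929953/500000000000) 2%Z.
    assert (8934589437/50000000000 <= Lq ((3/8)^2))
      by ln_certificate (89108910891/1000000000000) 0%Z.
    lra. }
  destruct (Rle_lt_dec x (201/500)).
  { apply (defect_neg_of_enclosure k (574/100) x (389/1000) (201/500)); try lra.
    assert (Lq (201/500) <= 111547610161/100000000000)
      by ln_certificate (-134587554269/1000000000000) 2%Z.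
    assert (981910571/5000000000 <= Lq ((389/1000)^2))
      by ln_certificate (48938350117/500000000000) 0%Z.
    lra. }
  destruct (Rle_lt_dec x (413/1000)).
  { apply (defect_neg_of_enclosure k (574/100) x (201/500) (413/1000)); try lra.
    assert (Lq (413/1000) <= 486387811/400000000)
      by ln_certificate (-42478565861/500000000000) 2%Z.
    assert (21412655467/100000000000 <= Lq ((201/500)^2))
      by ln_certificate (106656071721/1000000000000) 0%Z.
    lra. }
  apply (defect_neg_of_enclosure k (574/100) x (413/1000) (21/50)); try lra.
  assert (Lq (21/50) <= 128785429519/100000000000)
    by ln_certificate (-12295081967/250000000000) 2%Z.
  assert (11511290957/50000000000 <= Lq ((413/1000)^2))
    by ln_certificate (114607137169/1000000000000) 0%Z.
  lra.
Qed.

Lemma defect_pos_049 (k : R) : 0 <= k <= 13/2 -> 0 < defect k (49/100).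
Proof.
  intros Hk. unfold defect.
  assert (80966960859/25000000000 <= Lq (49/100))
    by ln_certificate (-113043478261/1000000000000) 5%Z.
  assert (Lq ((49/100)^2) <= 37974272691/100000000000)
    by ln_certificate (-77716032231/500000000000) 1%Z.
  assert (0 < Lq ((49/100)^2)) by (apply Lq_pos; lra).
  assert (k * Lq ((49/100)^2) <= 13/2 * Lq ((49/100)^2)) by (apply Rmult_le_compat_r; lra).
  lra.
Qed.

Lemma defect_derivative (k c : R) : 0 < c < 1/2 ->
  derivable_pt_lim (defect k) c
    (((1 + c) * (1 - 2 * c^2) - 2 * k * c * (1 - 2 * c))
     / ((1 - c^2) * (1 - 2 * c) * (1 - 2 * c^2))).
Proof.
  intros Hc. apply is_derive_Reals. unfold defect, Lq.
  auto_derive.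
  - repeat split; try (intro; nra); apply Rdiv_lt_0_compat; nra.
  - field. repeat split; nra.
Qed.

Lemma defect_continuous (k x : R) : 0 < x < 1/2 -> continuity_pt (defect k) x.
Proof.
  intros Hx. apply derivable_continuous_pt. eexists. apply defect_derivative. exact Hx.
Qed.

Lemma defect_increasing (k x y : R) : 0 <= k <= 13/2 -> 21/50 <= x -> x < y -> y < 1/2 ->
  defect k x < defect k y.
Proof.
  intros Hk Hx Hxy Hy.
  destruct (MVT_cor2 (defect k) _ x y Hxy (fun c Hc => defect_derivative k c ltac:(lra)))
    as [c [Hmvt Hc]].
  assert (Hnum : 0 < (1 + c) * (1 - 2 * c^2) - 2 * k * c * (1 - 2 * c)).
  { assert (2 * k * c * (1 - 2 * c) <= 13 * c * (1 - 2 * c)).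
    { assert (0 <= c * (1 - 2 * c)) by nra. nra. }
    assert (0 < (1 + c) * (1 - 2 * c^2) - 13 * c * (1 - 2 * c)).
    { set (e := c - 21/50). replace c with (21/50 + e) by (unfold e; ring).
      assert (0 <= e <= 8/100) by (unfold e; lra). nra. }
    lra. }
  assert (Hden : 0 < (1 - c^2) * (1 - 2 * c) * (1 - 2 * c^2))
    by (repeat apply Rmult_lt_0_compat; nra).
  assert (0 < defect k y - defect k x).
  { rewrite Hmvt. apply Rmult_lt_0_compat; [apply Rdiv_lt_0_compat|]; lra. }
  lra.
Qed.

Lemma defect_root_exists (k : R) : 574/100 <= k <= 13/2 ->
  exists x, 21/50 < x < 49/100 /\ defect k x = 0.
Proof.
  intros Hk.
  assert (Hlo := defect_neg_low k (21/50) ltac:(lra) ltac:(lra)).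
  assert (Hhi := defect_pos_049 k ltac:(lra)).
  destruct (Ranalysis5.IVT_interv (defect k) (21/50) (49/100)) as [x [Hx Hroot]];
    [intros a Ha; apply defect_continuous; lra | lra | exact Hlo | exact Hhi |].
  exists x. split; [|exact Hroot].
  split; apply Rnot_le_lt; intros Hle.
  - replace x with (21/50) in Hroot by lra. lra.
  - replace x with (49/100) in Hroot by lra. lra.
Qed.

Lemma defect_root_localization (k x a b : R) : 574/100 <= k <= 13/2 ->
  21/50 <= a < b -> b < 1/2 -> 3/8 <= x < 1/2 -> defect k x = 0 ->
  defect k a < 0 -> 0 < defect k b -> a < x < b.
Proof.
  intros Hk Hab Hb Hx Hroot Ha Hbpos. split; apply Rnot_le_lt; intros Hle.
  - destruct (Rle_lt_dec x (21/50)).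
    + assert (defect k x < 0) by (apply defect_neg_low; lra). lra.
    + destruct (Req_dec x a) as [->|]; [lra|].
      assert (defect k x < defect k a) by (apply defect_increasing; lra). lra.
  - destruct (Req_dec x b) as [->|]; [lra|].
    assert (defect k b < defect k x) by (apply defect_increasing; lra). lra.
Qed.

Lemma xfix_spec (d : R) : 674/100 <= d <= 15/2 ->
  21/50 < xfix d < 49/100 /\ defect (d - 1) (xfix d) = 0.
Proof.
  intros Hd.
  destruct (defect_root_exists (d - 1) ltac:(lra)) as [x0 [Hx0 Hroot0]].
  assert (Hfix0 : 3/8 <= x0 <= 1/2 /\ Psi d x0 = x0).
  { split; [lra|]. apply Psi_fixed_iff; lra. }
  destruct (epsilon_spec (inhabits 0) (fun x => 3/8 <= x <= 1/2 /\ Psi d x = x)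
              (ex_intro _ x0 Hfix0)) as [Hrange Hfix].
  fold (xfix d) in Hrange, Hfix.
  apply Psi_fixed_iff in Hfix; [|lra|lra]. destruct Hfix as [Hlt Hroot].
  split; [|exact Hroot].
  apply (defect_root_localization (d - 1)); try lra.
  - apply defect_neg_low; lra.
  - apply defect_pos_049; lra.
Qed.

Lemma filterlim_root_of_sign_change (F : R -> R -> R) (D : R -> Prop) (r : R -> R)
  (k0 lo hi : R) :
  lo < r k0 < hi ->
  (forall x, continuous (fun k => F k x) k0) ->
  (forall x, lo < x < r k0 -> F k0 x < 0) ->
  (forall x, r k0 < x < hi -> 0 < F k0 x) ->
  (forall k a b, D k -> lo < a < b -> b < hi -> F k a < 0 -> 0 < F k b -> a < r k < b) ->
  filterlim r (within D (locally k0)) (locally (r k0)).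
Proof.
  intros Hr Hcont Hneg Hpos Hloc.
  apply filterlim_locally. intros eps.
  set (e := Rmin eps (Rmin (r k0 - lo) (hi - r k0)) / 2).
  assert (He : 0 < e /\ e < eps /\ lo < r k0 - e /\ r k0 + e < hi).
  { assert (Heps := cond_pos eps).
    assert (H1 := Rmin_l eps (Rmin (r k0 - lo) (hi - r k0))).
    assert (H2 := Rmin_r eps (Rmin (r k0 - lo) (hi - r k0))).
    assert (H3 := Rmin_l (r k0 - lo) (hi - r k0)).
    assert (H4 := Rmin_r (r k0 - lo) (hi - r k0)).
    assert (0 < Rmin eps (Rmin (r k0 - lo) (hi - r k0)))
      by (apply Rmin_pos; [lra | apply Rmin_pos; lra]).
    unfold e. lra. }
  assert (Hleft : locally k0 (fun k => F k (r k0 - e) < 0))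
    by (apply (Hcont _ (fun y => y < 0)), open_lt, Hneg; lra).
  assert (Hright : locally k0 (fun k => 0 < F k (r k0 + e)))
    by (apply (Hcont _ (fun y => 0 < y)), open_gt, Hpos; lra).
  unfold within. generalize (filter_and _ _ Hleft Hright). apply filter_imp.
  intros k [Ha Hb] Dk.
  destruct (Hloc k (r k0 - e) (r k0 + e) Dk ltac:(lra) ltac:(lra) Ha Hb).
  change (Rabs (r k - r k0) < eps). apply Rabs_def1; lra.
Qed.

Lemma xfix_continuous (d0 : R) : 674/100 <= d0 <= 15/2 ->
  filterlim xfix (within (fun y => 674/100 <= y <= 15/2) (locally d0)) (locally (xfix d0)).
Proof.
  intros Hd0. destruct (xfix_spec d0 Hd0) as [Hx0 Hroot0].
  apply (filterlim_root_of_sign_change (fun d x => defect (d - 1) x) _ _ d0 (21/50) (1/2)).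
  - lra.
  - intros x. apply (@ex_derive_continuous R_AbsRing R_NormedModule).
    unfold defect. auto_derive. exact I.
  - intros x Hx. rewrite <- Hroot0. apply defect_increasing; lra.
  - intros x Hx. rewrite <- Hroot0. apply defect_increasing; lra.
  - intros d a b Hd Hab Hb Ha Hbpos. destruct (xfix_spec d Hd) as [Hx Hroot].
    apply (defect_root_localization (d - 1)); lra.
Qed.

Definition Phi3_intercept (x : R) : R := - ln (1 - x) + ln (1 - 2 * x^3) - ln (1 - x^2).
Definition Phi3_slope (x : R) : R := - (2/3) * ln (1 - 2 * x^3) + ln (1 - x^2).

Lemma Phi3_affine (d x : R) : d <> 0 -> Phi3 d x = Phi3_intercept x + d * Phi3_slope x.
Proof. intros Hd. unfold Phi3, Phi3_intercept, Phi3_slope. field. exact Hd. Qed.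

Lemma Phi3_coefficients_continuous (x : R) : 0 < x < 1/2 ->
  continuous Phi3_intercept x /\ continuous Phi3_slope x.
Proof.
  intros Hx. split; apply (@ex_derive_continuous R_AbsRing R_NormedModule);
    unfold Phi3_intercept, Phi3_slope; auto_derive; repeat split; nra.
Qed.

Lemma filterlim_plus_mult {T : Type} {F : (T -> Prop) -> Prop} {FF : Filter F}
  (f g h : T -> R) (a b c : R) :
  filterlim f F (locally a) -> filterlim g F (locally b) -> filterlim h F (locally c) ->
  filterlim (fun t => f t + g t * h t) F (locally (a + b * c)).
Proof.
  intros Hf Hg Hh.
  apply (filterlim_comp_2 (H := locally (b * c)) f (fun t => g t * h t) Rplus Hf).
  - exact (filterlim_comp_2 g h Rmult Hg Hh (@filterlim_mult R_AbsRing b c)).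
  - exact (@filterlim_plus R_AbsRing R_NormedModule a (b * c)).
Qed.

Lemma Phi_star_continuous (d0 : R) : 674/100 <= d0 <= 15/2 ->
  filterlim Phi_star (within (fun y => 674/100 <= y <= 15/2) (locally d0))
    (locally (Phi_star d0)).
Proof.
  intros Hd0.
  destruct (xfix_spec d0 Hd0) as [Hx0 _].
  destruct (Phi3_coefficients_continuous (xfix d0)) as [Hint Hslope]; [lra|].
  assert (Hxfix := xfix_continuous d0 Hd0).
  apply (filterlim_within_ext _ (fun d => Phi3_intercept (xfix d) + d * Phi3_slope (xfix d))).
  { intros d Hd. unfold Phi_star. rewrite Phi3_affine; lra. }
  unfold Phi_star. rewrite Phi3_affine by lra.
  apply filterlim_plus_mult.
  - exact (filterlim_comp _ _ _ _ _ _ _ _ Hxfix Hint).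
  - intros P HP. unfold filtermap, within. apply filter_imp with P; auto.
  - exact (filterlim_comp _ _ _ _ _ _ _ _ Hxfix Hslope).
Qed.

Lemma Phi3_enclosure (d a x b : R) : 3/2 <= d -> 0 <= a <= x -> x <= b < 1/2 ->
  - ln (1 - a) - (2 * d / 3 - 1) * ln (1 - 2 * a^3) + (d - 1) * ln (1 - b^2) <= Phi3 d x
  <= - ln (1 - b) - (2 * d / 3 - 1) * ln (1 - 2 * b^3) + (d - 1) * ln (1 - a^2).
Proof.
  intros Hd Hax Hxb.
  replace (Phi3 d x)
    with (- ln (1 - x) - (2 * d / 3 - 1) * ln (1 - 2 * x^3) + (d - 1) * ln (1 - x^2))
    by (unfold Phi3; field; lra).
  assert (Hpow : forall n, a^n <= x^n <= b^n /\ b^n <= (1/2)^n)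
    by (intros n; repeat split; apply pow_incr; lra).
  destruct (Hpow 2%nat) as [[Ha2 Hb2] Hb2']. destruct (Hpow 3%nat) as [[Ha3 Hb3] Hb3'].
  assert (ln (1 - b) <= ln (1 - x) <= ln (1 - a)) by (split; apply ln_le; lra).
  assert (ln (1 - 2 * b^3) <= ln (1 - 2 * x^3) <= ln (1 - 2 * a^3))
    by (simpl in Hb3'; split; apply ln_le; lra).
  assert (ln (1 - b^2) <= ln (1 - x^2) <= ln (1 - a^2))
    by (simpl in Hb2'; split; apply ln_le; lra).
  split; nra.
Qed.

Lemma Phi_star_674_pos : Phi_star (674/100) > 0.
Proof.
  destruct (xfix_spec (674/100)) as [Hx Hroot]; [lra|].
  assert (Hencl : 446539/1000000 < xfix (674/100) < 22327/50000).
  { apply (defect_root_localization (674/100 - 1)); try lra; unfold defect.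
    - assert (Lq (446539/1000000) <= 82204584959/50000000000)
        by ln_certificate (12818950027/100000000000) 2%Z.
      assert (286427719/1000000000 <= Lq ((446539/1000000)^2))
        by ln_certificate (4445084709/31250000000) 0%Z.
      lra.
    - assert (1315286867/800000000 <= Lq (22327/50000))
        by ln_certificate (128197810709/1000000000000) 2%Z.
      assert (Lq ((22327/50000)^2) <= 28642957447/100000000000)
        by ln_certificate (71121809823/500000000000) 0%Z.
      lra. }
  destruct (Phi3_enclosure (674/100) (446539/1000000) (xfix (674/100)) (22327/50000))
    as [Hlow _]; try lra.
  assert (ln (1 - 446539/1000000) <= -11831279729/20000000000)
    by ln_certificate (50747963143/1000000000000) (-1)%Z.
  assert (ln (1 - 2 * (446539/1000000)^3) <= -9805436879/50000000000)
    by ln_certificate (-9774131957/100000000000) 0%Z.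
  assert (-22239129883/100000000000 <= ln (1 - (22327/50000)^2))
    by ln_certificate (-55369806447/500000000000) 0%Z.
  unfold Phi_star. lra.
Qed.

Lemma Phi_star_75_neg : Phi_star (15/2) < 0.
Proof.
  destruct (xfix_spec (15/2)) as [Hx Hroot]; [lra|].
  assert (Hencl : 4693/10000 < xfix (15/2) < 2347/5000).
  { apply (defect_root_localization (15/2 - 1)); try lra; unfold defect.
    - assert (Lq (4693/10000) <= 215678706501/100000000000)
        by ln_certificate (193267443/5000000000) 3%Z.
      assert (16595630519/50000000000 <= Lq ((4693/10000)^2))
        by ln_certificate (-89339254937/500000000000) 1%Z.
      lra.
    - assert (4319722483/2000000000 <= Lq (2347/5000))
        by ln_certificate (5023524799/125000000000) 3%Z.
      assert (Lq ((2347/5000)^2) <= 16606391173/50000000000)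
        by ln_certificate (-178574340171/1000000000000) 1%Z.
      lra. }
  destruct (Phi3_enclosure (15/2) (4693/10000) (xfix (15/2)) (2347/5000))
    as [_ Hup]; try lra.
  assert (-7921835509/12500000000 <= ln (1 - 2347/5000))
    by ln_certificate (14845720939/500000000000) (-1)%Z.
  assert (-362101809/1562500000 <= ln (1 - 2 * (2347/5000)^3))
    by ln_certificate (-115356762959/1000000000000) 0%Z.
  assert (ln (1 - (4693/10000)^2) <= -3109653653/12500000000)
    by ln_certificate (-123748594267/1000000000000) 0%Z.
  unfold Phi_star. lra.
Qed.

Theorem lemma4p2 :
  (forall d : R, 674 / 100 <= d <= 15 / 2 ->
     filterlim Phi_star
       (within (fun y => 674 / 100 <= y <= 15 / 2) (locally d))
       (locally (Phi_star d)))
  /\ Phi_star (674 / 100) > 0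
  /\ Phi_star (15 / 2) < 0.
Proof.
  split; [|split].
  - exact Phi_star_continuous.
  - exact Phi_star_674_pos.
  - exact Phi_star_75_neg.
Qed.
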